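(* Let $n\ge1$ and $1\le p\le 2n$. Then the elements $y_0^l y_p$, $l=0,1,\dots,n-v_p$, form a $k$-basis of $\mathcal P^p(\mathcal O_n)$. (Here products are taken in the graded algebra $\mathcal P(\mathcal O_n)$.)
   Context: $k$ is a field of characteristic zero, $\mathcal O_n=k[x]/(x^{n+1})$, elements of $\mathcal O_n$ identified with multiplication operators, $\operatorname{ad}_x(\delta)=x\delta-\delta x$. The order filtration is $\mathcal D^p(\mathcal O_n)=\{\delta\in\operatorname{End}_k(\mathcal O_n):[f_0,[f_1,\dots,[f_p,\delta]\dots]]=0\ \forall f_i\in\mathcal O_n\}$ ($\mathcal D^{-1}=0$); $\mathcal P(\mathcal O_n)=\bigoplus_{p\ge0}\mathcal P^p(\mathcal O_n)$ with $\mathcal P^p(\mathcal O_n)=\mathcal D^p(\mathcal O_n)/\mathcal D^{p-1}(\mathcal O_n)$ is the associated graded commutative algebra. For $\delta\in\mathcal D^p(\mathcal O_n)$, $\operatorname{ad}_x^p(\delta)$ is multiplication by an element of $\mathcal O_n$ and $\operatorname{ad}_x^p:\mathcal D^p(\mathcal O_n)\to\mathcal O_n$ is $\mathcal O_n$-linear, so its image is an ideal $(x^{v_p})$ of $\mathcal O_n$; $v_p\in\{0,\dots,n\}$ denotes the corresponding exponent. For $1\le p\le 2n$, choose $\delta_p\in\mathcal D^p(\mathcal O_n)$ with $\frac{1}{p!}\operatorname{ad}_x^p(\delta_p)=x^{v_p}$, and let $y_p\in\mathcal P^p(\mathcal O_n)$ be its class (independent of the choice). Let $y_0\in\mathcal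 P^0(\mathcal O_n)$ be the class of (multiplication by) $x$. *)

From HB Require Import structures.
From mathcomp Require Import all_boot all_order all_algebra.
Set Implicit Arguments. Unset Strict Implicit. Unset Printing Implicit Defensive.
Import GRing.Theory.
Local Open Scope ring_scope.

(* O_n = k[x]/(x^{n+1}) with k-basis 1, x, ..., x^n.  End_k(O_n) is represented
   by (n+1)x(n+1) matrices acting on coordinate column vectors; composition of
   operators is matrix product. *)

(* Multiplication by x: sends x^j to x^{j+1} (and x^n to 0). *)
Definition xop (k : fieldType) (n : nat) : 'M[k]_n.+1 :=
  \matrix_(i, j) ((i : nat) == (j : nat).+1)%:R.

(* Multiplication operator by the class of f in O_n. Every element of O_n is
   the class of some polynomial f. *)
Definition mulop (k : fieldType) (n : nat) (f : {poly k}) : 'M[k]_n.+1 :=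
  \sum_(i < size f) f`_i *: xop k n ^+ i.

Fixpoint comm_iter (k : fieldType) (n : nat) (fs : seq {poly k})
    (d : 'M[k]_n.+1) : 'M[k]_n.+1 :=
  match fs with
  | [::] => d
  | f :: fs' => mulop n f * @comm_iter k n fs' d - @comm_iter k n fs' d * mulop n f
  end.

Definition Dord (k : fieldType) (n p : nat) (d : 'M[k]_n.+1) : Prop :=
  forall fs : seq {poly k}, size fs = p.+1 -> comm_iter fs d = 0.

Definition adx (k : fieldType) (n : nat) (d : 'M[k]_n.+1) : 'M[k]_n.+1 :=
  xop k n * d - d * xop k n.

From Pilot Require Import Defs.
From HB Require Import structures.
From mathcomp Require Import all_boot all_order all_algebra.
From mathcomp Require Import zify.
Import GRing.Theory.
Local Open Scope ring_scope.

(* Every multiplication operator commutes with whatever commutes with x, and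
   ad_x commutes with ad_f for f in O_n; hence d lies in D^q exactly when
   ad_x^(q+1) d = 0.  So ad_x^p is a linear map on D^p with kernel D^(p-1),
   and P^p is isomorphic to its image (x^v), whose basis is x^(l+v),
   l <= n - v.  Since ad_x^p (x^l d_p) = p! x^(l+v) and p! is invertible in
   characteristic zero, the x^l d_p form a basis of P^p. *)

Section IterLinear.
Variables (R : pzRingType) (V : lmodType R) (f : {linear V -> V}) (m : nat).

Lemma iter_is_linear : linear (iter m f).
Proof. by elim: m => [|j IH] a u w //=; rewrite IH linearP. Qed.

HB.instance Definition _ :=
  GRing.isLinear.Build R V V *:%R (iter m f) iter_is_linear.

End IterLinear.

Lemma commrZ (R : pzRingType) (A : algType R) (x y : A) (a : R) :
  GRing.comm x y -> GRing.comm x (a *: y).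
Proof. by rewrite /GRing.comm -scalerAr -scalerAl => ->. Qed.

Lemma sum_ord_widen0 (V : nmodType) N1 N2 (F : nat -> V) : (N1 <= N2)%N ->
  (forall i, (N1 <= i < N2)%N -> F i = 0) ->
  \sum_(i < N1) F i = \sum_(i < N2) F i.
Proof.
move=> le12 F0; rewrite (big_ord_widen _ _ le12) big_mkcond /=.
apply: eq_bigr => i _; case: ifP => // /negbT; rewrite -leqNgt => le1i.
by rewrite F0 // le1i ltn_ord.
Qed.

Section MultiplicationByX.
Variables (k : fieldType) (n : nat).
Local Notation X := (xop k n).
Local Notation adx := (@adx k n).

Lemma xop_exprE j (i m : 'I_n.+1) : (X ^+ j) i m = ((i : nat) == (m + j)%N)%:R.
Proof.
elim: j i => [|j IH] i; first by rewrite expr0 mxE addn0.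
rewrite exprS mxE.
have entry (t : 'I_n.+1) : X i t * (X ^+ j) t m = ((i : nat) == t.+1)%:R *
                                                 ((t : nat) == (m + j)%N)%:R.
  by rewrite mxE IH.
case: (eqVneq (i : nat) (m + j)%N.+1) => [Ei|Ni].
  have ltj : (m + j < n.+1)%N by have := ltn_ord i; rewrite Ei; lia.
  rewrite (bigD1 (Ordinal ltj)) //= big1 ?entry /= ?Ei ?addnS ?eqxx ?mulr1 ?addr0 //.
  move=> t Nt; rewrite entry; case: (eqVneq (t : nat) (m + j)%N) => Et; last by rewrite mulr0.
  by case/negP: Nt; apply/eqP/val_inj.
rewrite addnS (negbTE Ni) big1 // => t _; rewrite entry.
by case: (eqVneq (t : nat) (m + j)%N) => [->|_]; rewrite ?(negbTE Ni) (mul0r, mulr0).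
Qed.

Lemma xop_expr_eq0 j : (n < j)%N -> X ^+ j = 0.
Proof.
move=> ltnj; apply/matrixP => i m; rewrite xop_exprE mxE.
by case: eqP => // Ei; have := ltn_ord i; rewrite Ei; lia.
Qed.

Lemma mulopX : mulop n 'X = X.
Proof.
by rewrite /mulop size_polyX big_ord_recr big_ord1 /= !coefX scale0r add0r scale1r.
Qed.

Lemma commr_mulop f (y : 'M[k]_n.+1) : GRing.comm X y -> GRing.comm (mulop n f) y.
Proof.
move=> Xy; apply/commr_sym/commr_sum => i _.
by apply/commrZ/commrX/commr_sym.
Qed.

Lemma adx_eq0 (y : 'M[k]_n.+1) : adx y = 0 <-> GRing.comm X y.
Proof. by rewrite /adx /GRing.comm; split => [/eqP|->]; rewrite ?subr_eq0 ?subrr => // /eqP. Qed.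

Lemma adx_is_linear : linear adx.
Proof.
by move=> a u w; rewrite /Defs.adx mulrDr mulrDl opprD addrACA scalerBr scalerAr scalerAl.
Qed.

HB.instance Definition _ :=
  GRing.isLinear.Build k 'M[k]_n.+1 'M[k]_n.+1 *:%R adx adx_is_linear.

Lemma adx_commutator (F y : 'M[k]_n.+1) : GRing.comm X F ->
  adx (F * y - y * F) = F * adx y - adx y * F.
Proof.
move=> XF; rewrite /Defs.adx !mulrBr !mulrBl !mulrA XF -[y * F * X]mulrA -XF mulrA.
by rewrite !opprB addrACA [RHS]addrACA; congr (_ + _); exact: addrC.
Qed.

Lemma iter_adx_commutator m (F y : 'M[k]_n.+1) : GRing.comm X F ->
  iter m adx (F * y - y * F) = F * iter m adx y - iter m adx y * F.
Proof. by move=> XF; elim: m => //= m ->; rewrite adx_commutator. Qed.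

Lemma iter_adx_mulXl m l (y : 'M[k]_n.+1) :
  iter m adx (X ^+ l * y) = X ^+ l * iter m adx y.
Proof.
elim: m => //= m ->; rewrite /Defs.adx mulrBr mulrA (commrX l (commr_refl X)).
by rewrite -!mulrA.
Qed.

Lemma comm_iter_nseqX m (d : 'M[k]_n.+1) : comm_iter (nseq m 'X) d = iter m adx d.
Proof. by elim: m => //= m ->; rewrite mulopX. Qed.

(* ad_x^m passes through [f, _], and whatever ad_x kills commutes with x,
   hence with every multiplication operator f. *)
Lemma iter_adx_comm_iter_eq0 fs m (d : 'M[k]_n.+1) :
  iter (m + size fs) adx d = 0 -> iter m adx (comm_iter fs d) = 0.
Proof.
elim: fs m => [|f fs IH] m /=; first by rewrite addn0.
rewrite addnS -addSn => /IH /adx_eq0 Xy.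
have XF : GRing.comm X (mulop n f) by apply/commr_sym/commr_mulop/commr_refl.
by rewrite iter_adx_commutator // (commr_mulop _ _ Xy) subrr.
Qed.

Lemma DordP q (d : 'M[k]_n.+1) : Dord q d <-> iter q.+1 adx d = 0.
Proof.
split=> [Dd | ad0 fs sz_fs]; first by rewrite -comm_iter_nseqX Dd ?size_nseq.
by apply: (@iter_adx_comm_iter_eq0 fs 0); rewrite add0n sz_fs.
Qed.

Lemma sum_xop_expr_coef N v (c : 'I_N -> k) (l : 'I_N) : (l + v <= n)%N ->
  (\sum_(i < N) c i *: X ^+ (i + v)) (inord (l + v)) 0 = c l.
Proof.
move=> le_lv; rewrite summxE (bigD1 l) //= big1.
  by rewrite mxE xop_exprE inordK // add0n eqxx mulr1 addr0.
move=> i Nil; rewrite mxE xop_exprE inordK // add0n eqn_add2r.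
by case: eqP => [Eil|]; rewrite ?mulr0 //; case/negP: Nil; apply/eqP/val_inj.
Qed.

Lemma mulop_mul_xop_expr g v N : (n - v < N)%N ->
  mulop n g * X ^+ v = \sum_(i < N) g`_i *: X ^+ (i + v).
Proof.
move=> ltN; rewrite /mulop mulr_suml.
under eq_bigr do rewrite -scalerAl -exprD.
pose F i := g`_i *: X ^+ (i + v).
rewrite (@sum_ord_widen0 _ (size g) (size g + N) F) ?leq_addr //; last first.
  by move=> i /andP[le_gi _]; rewrite /F nth_default ?scale0r.
symmetry; apply: (@sum_ord_widen0 _ N _ F) => [|i /andP[le_Ni _]]; first exact: leq_addl.
by rewrite /F xop_expr_eq0 ?scaler0 //; lia.
Qed.

End MultiplicationByX.

Theorem lemma4 (k : fieldType) (hk : [pchar k] =i pred0)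
  (n p : nat) (hn : (0 < n)%N) (hp1 : (0 < p)%N) (hp2 : (p <= 2 * n)%N)
  (v : nat) (hv : (v <= n)%N)
  (* image of ad_x^p : D^p -> O_n is the ideal (x^v) *)
  (himg : forall M : 'M[k]_n.+1,
     (exists2 d, @Dord k n p d & iter p (@adx k n) d = M) <->
     (exists g : {poly k}, M = @mulop k n g * xop k n ^+ v))
  (* delta_p *)
  (d : 'M[k]_n.+1) (hd : @Dord k n p d)
  (hdv : (p`!%:R)^-1 *: iter p (@adx k n) d = xop k n ^+ v) :
  (* representatives of y_0^l y_p, l = 0..n-v *)
  let b := fun l : 'I_(n - v).+1 => xop k n ^+ l * d in
  (forall l, @Dord k n p (b l)) /\
  (forall c : 'I_(n - v).+1 -> k,
     @Dord k n p.-1 (\sum_l c l *: b l) -> forall l, c l = 0) /\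
  (forall e, @Dord k n p e ->
     exists c : 'I_(n - v).+1 -> k, @Dord k n p.-1 (e - \sum_l c l *: b l)).
Proof.
move=> b.
have fact_neq0 : (p`!%:R : k) != 0 by rewrite ((pcharf0P _).1 hk) -lt0n fact_gt0.
have adp_b l : iter p (@adx k n) (b l) = p`!%:R *: xop k n ^+ (l + v).
  by rewrite iter_adx_mulXl -(scalerKV fact_neq0 (iter _ _ d)) hdv -scalerAr -exprD.
have DordPpred e : Dord p.-1 e <-> iter p (@adx k n) e = 0 by rewrite DordP prednK.
split=> [l|]; first by apply/DordP; rewrite iter_adx_mulXl (iffLR (DordP _ _ _ _) hd) mulr0.
split=> [c /DordPpred | e De].
  rewrite linear_sum => sum0 l.
  have {}sum0 : \sum_i c i *: xop k n ^+ (i + v) = 0.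
    apply: (scalerI fact_neq0); rewrite scaler0 -[RHS]sum0 scaler_sumr.
    by apply: eq_bigr => i _; rewrite [RHS]linearZ /= adp_b !scalerA mulrC.
  by rewrite -(@sum_xop_expr_coef k n _ v c l) ?sum0 ?mxE //; have := ltn_ord l; lia.
have [g adp_e] : exists g : {poly k}, iter p (@adx k n) e = mulop n g * xop k n ^+ v.
  by apply/himg; exists e.
exists (fun l => g`_l / p`!%:R); apply/DordPpred.
rewrite linearB linear_sum /= adp_e (@mulop_mul_xop_expr _ _ _ _ (n - v).+1) //.
rewrite -sumrB big1 // => l _.
by rewrite [X in _ - X]linearZ /= adp_b scalerA divfK ?subrr.
Qed.
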